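(* Let $\delta$ be a symbolic ultrametric on a nonempty finite set $X$. Then its graph representation $G_\delta$ is a complete edge-colored permutation graph.
   Context: For a nonempty finite set $X$ and $k\in\mathbb{N}$, a surjective map $\delta:X\times X\to\{1,\dots,k\}$ is a symbolic ultrametric if (U1) $\delta(x,y)=\delta(y,x)$ for all $x,y$; (U2) $|\{\delta(x,y),\delta(x,z),\delta(y,z)\}|\le2$ for all $x,y,z$; (U3) there is no 4-element subset $\{x,y,u,v\}$ of $X$ with $\delta(x,y)=\delta(y,u)=\delta(u,v)\ne\delta(v,y)=\delta(x,v)=\delta(x,u)$. Its graph representation $G_\delta$ is the complete graph on $X$ in which each edge $\{x,y\}$ ($x\neq y$) receives color $\delta(x,y)$. A complete edge-colored graph $G=(V,E_1,\dots,E_k)$ is a complete graph on finite $V$ with edges partitioned into nonempty color classes $E_i$; $G_{|i}=(V,E_i)$. A labeling is a bijection $\ell:V\to\{1,\dots,|V|\}$. A graph $(V,E)$ with labeling $\ell$ is a simple permutation graph of a permutation $\pi$ if for all $u,v$ with $\ell(u)>\ell(v)$: $\{u,v\}\in E$ iff $\pi^{-1}(\ell(u))<\pi^{-1}(\ell(v))$. $G$ is a complete edge-colored permutation graph if there exist a labeling $\ell$ and permutations $\pi_1,\dots,\pi_k$ with $(G_{|i},\ell)$ a simple permutation graph of $\pi_i$ for all $i$. *)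

From mathcomp Require Import all_boot all_fingroup.
Set Implicit Arguments. Unset Strict Implicit. Unset Printing Implicit Defensive.

Definition symbolic_ultrametric (X : finType) (k : nat) (d : X -> X -> nat) : Prop :=
  [/\ (forall x y, 1 <= d x y <= k),
      (forall c, 1 <= c <= k -> exists x y, d x y = c),
      (forall x y, d x y = d y x),
      (forall x y z, size (undup [:: d x y; d x z; d y z]) <= 2)
    & ~ (exists x y u v : X, uniq [:: x; y; u; v] /\
          [/\ d x y = d y u, d y u = d u v, d u v <> d v y,
              d v y = d x v & d x v = d x u])].

(* Graph representation G_d: complete graph on X, edge {x,y} (x <> y)
   coloured d x y.  Its colour class E_i as an edge relation. *)
Definition graph_rep_class (X : finType) (d : X -> X -> nat) (i : nat) : rel X :=
  fun x y => (x != y) && (d x y == i).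

(* (V,E) with labeling l : V -> 'I_n (0-based version of {1..n}) is a simple
   permutation graph of the permutation p of 'I_n. *)
Definition simple_perm_graph (V : finType) (n : nat) (E : rel V)
    (l : V -> 'I_n) (p : 'S_n) : Prop :=
  forall u v : V, l v < l u -> (E u v <-> ((p^-1)%g (l u) < (p^-1)%g (l v))).

Definition complete_edge_colored_perm_graph (V : finType) (k : nat)
    (E : nat -> rel V) : Prop :=
  exists l : V -> 'I_#|V|, bijective l /\
    exists pi : nat -> 'S_#|V|,
      forall i, 1 <= i <= k -> simple_perm_graph (E i) l (pi i).

From mathcomp Require Import all_boot all_fingroup zify.
Set Implicit Arguments. Unset Strict Implicit. Unset Printing Implicit Defensive.

(* (U2) and (U3) force every set of at least two points to split into a
   nonempty proper part A such that all edges between A and its complement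
   carry one colour.  Listing the two parts of such splits recursively orders
   X so that, for x < y < z, d x y = d y z implies d x z = d x y.  For each
   colour i, reversing this order exactly on the pairs of colour i still gives
   a linear order (transitivity only has to be checked on triples, where it
   follows from the property above and (U2)).  Labelling the vertices by their
   positions in the first order, pi_i is read off from their positions in the
   i-th one. *)

Lemma index_full_inj (T : eqType) (s : seq T) :
  (forall x, x \in s) -> injective (index^~ s).
Proof. by move=> s_all x y; apply: index_inj; rewrite ?s_all. Qed.

Section StrictTotalOrder.

Variables (T : finType) (R : rel T).
Hypotheses (R_irr : irreflexive R) (R_trans : transitive R)
  (R_total : forall u v, u != v -> R u v || R v u).

Definition rank u := #|[set w | R w u]|.

Lemma rank_lt u : rank u < #|T|.
Proof.
rewrite -cardsT; apply: proper_card; apply/properP; split; first exact: subsetT.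
by exists u; rewrite !inE ?R_irr.
Qed.

Lemma ltn_rank u v : (rank u < rank v) = R u v.
Proof.
have rank_mono x y : R x y -> rank x < rank y.
  move=> Rxy; apply: proper_card; apply/properP; split.
    by apply/subsetP => w; rewrite !inE => /R_trans; apply.
  by exists x; rewrite !inE ?R_irr.
apply/idP/idP; last exact: rank_mono.
case: (eqVneq u v) => [->|uv]; first by rewrite ltnn.
by case/orP: (R_total uv) => // /rank_mono; rewrite ltnNge => /negP + /ltnW.
Qed.

Lemma rank_inj : injective rank.
Proof.
move=> u v eq_rank; apply/eqP; apply: contraT => uv.
by case/orP: (R_total uv); rewrite -ltn_rank eq_rank ltnn.
Qed.

Lemma perm_of_strict_total_order (l : T -> 'I_#|T|) (h : 'I_#|T| -> T) :
    cancel l h -> cancel h l ->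
  {p : 'S_#|T| | forall u v, R u v = ((p^-1)%g (l u) < (p^-1)%g (l v))}.
Proof.
move=> lK hK.
pose ord_rank u := Ordinal (rank_lt u).
have ord_rank_inj : injective ord_rank by move=> u v /(congr1 val)/rank_inj.
exists (perm (inj_comp ord_rank_inj (can_inj hK)))^-1%g => u v.
by rewrite invgK !permE /= !lK ltn_rank.
Qed.

End StrictTotalOrder.

Section FlipOrder.

Variables (T : finType) (r : T -> nat) (f : rel T).
Hypotheses (r_inj : injective r) (f_sym : symmetric f).
Hypothesis f_trans :
  forall x y z, r x < r y -> r y < r z -> f x y -> f y z -> f x z.
Hypothesis f_cotrans :
  forall x y z, r x < r y -> r y < r z -> f x z -> f x y || f y z.

Definition flip_order u v := (u != v) && (if r u < r v then ~~ f u v else f u v).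

Lemma flip_order_irr : irreflexive flip_order.
Proof. by move=> u; rewrite /flip_order eqxx. Qed.

Lemma flip_order_total u v : u != v -> flip_order u v || flip_order v u.
Proof.
move=> uv; rewrite /flip_order uv eq_sym uv (f_sym v u) /=.
case: ltngtP => [_|_|/r_inj eq_uv]; [exact: orNb | exact: orbN |].
by rewrite eq_uv eqxx in uv.
Qed.

Lemma flip_order_asym u v : flip_order u v -> ~~ flip_order v u.
Proof.
rewrite /flip_order (f_sym v u) => /andP[uv]; rewrite eq_sym uv /=.
case: ltngtP => [_|_|/r_inj eq_uv]; [by [] | by move=> -> | ].
by rewrite eq_uv eqxx in uv.
Qed.

Lemma flip_order_no_3cycle u v w :
  flip_order u v -> flip_order v w -> flip_order w u -> False.
Proof.
(* A 3-cycle can be rotated to start at its r-least vertex. *)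
wlog [uv uw]: u v w / r u < r v /\ r u < r w.
  move=> wlog Ruv Rvw Rwu.
  have neq_r x y : flip_order x y -> r x != r y.
    by case/andP=> xy _; apply: contra xy => /eqP/r_inj->.
  have : (r u < r v /\ r u < r w) \/ (r v < r w /\ r v < r u) \/
         (r w < r u /\ r w < r v).
    by move: (neq_r _ _ Ruv) (neq_r _ _ Rvw) (neq_r _ _ Rwu); lia.
  by case=> [|[|]] least;
    [apply: (wlog u v w) | apply: (wlog v w u) | apply: (wlog w u v)].
rewrite /flip_order (ltnNge (r w)) (ltnW uw) uv /= (f_sym w u).
move=> /andP[_ fuv] /andP[vw + /andP[_ fuw]].
case: (ltngtP (r v) (r w)) => [vw' fvw | wv' fvw | /r_inj eq_vw].
- by move: (f_cotrans uv vw' fuw); rewrite (negbTE fuv) (negbTE fvw).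
- by rewrite f_sym in fvw; rewrite (f_trans uw wv' fuw fvw) in fuv.
- by rewrite eq_vw eqxx in vw.
Qed.

Lemma flip_order_trans : transitive flip_order.
Proof.
move=> v u w Ruv Rvw; case: (eqVneq u w) => [eq_uw | uw].
  by move: Rvw; rewrite -eq_uw => /flip_order_asym; rewrite Ruv.
case/orP: (flip_order_total uw) => // Rwu.
by case: (flip_order_no_3cycle Ruv Rvw Rwu).
Qed.

End FlipOrder.

Section SymbolicUltrametric.

Variables (X : finType) (d : X -> X -> nat).
Hypothesis d_sym : forall x y, d x y = d y x.
Hypothesis d_U2 : forall x y z, size (undup [:: d x y; d x z; d y z]) <= 2.
Hypothesis d_U3 : ~ (exists x y u v : X, uniq [:: x; y; u; v] /\
  [/\ d x y = d y u, d y u = d u v, d u v <> d v y, d v y = d x v & d x v = d x u]).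

Lemma ultra_isosceles x y z :
  d x y != d y z -> d x z != d y z -> d x y = d x z.
Proof.
move=> ne_xy ne_xz; apply/eqP; apply: contraTT (d_U2 x y z) => ne_xyz.
by rewrite /= !inE (negbTE ne_xy) (negbTE ne_xz) (negbTE ne_xyz).
Qed.

Lemma ultra_path_colour x a w y c e : uniq [:: x; a; w; y] -> c != e ->
  d x a = c -> d a w = c -> d w y = c -> d x w = e -> d x y = e -> d a y = c.
Proof.
move=> xawy ce xa aw wy xw xy; case: (eqVneq (d a y) c) => // ay.
have ya : d y a = d y x.
  by apply: ultra_isosceles; rewrite (d_sym a x) xa d_sym // xy eq_sym.
move/eqP: ce => ce.
have yx := d_sym y x.
by case: d_U3; exists x, a, w, y; split => //; split; congruence.
Qed.

Definition uniform_cut (S A : {set X}) (c : nat) :=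
  [/\ A \subset S, A != set0, S :\: A != set0
    & {in A & S :\: A, forall a b, d a b = c}].

Lemma uniform_cutC S A c : uniform_cut S A c -> uniform_cut S (S :\: A) c.
Proof.
case=> AS A0 SA0 Ac.
have SSA : S :\: (S :\: A) = A by rewrite setDDr setDv set0U; apply/setIidPr.
by split; rewrite ?SSA ?subsetDl // => b a bB aA; rewrite d_sym; apply: Ac.
Qed.

Lemma uniform_cut_pair x y : x != y -> uniform_cut [set x; y] [set x] (d x y).
Proof.
move=> xy; split.
- by rewrite sub1set !inE eqxx.
- by apply/set0Pn; exists x; rewrite inE.
- by apply/set0Pn; exists y; rewrite !inE eqxx orbT andbT eq_sym.
- by move=> a b; rewrite !inE => /eqP-> /andP[/negbTE-> /eqP->].
Qed.

Lemma uniform_cut_add_uniform Y A c x :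
  uniform_cut Y A c -> {in A, forall a, d x a = c} -> uniform_cut (x |: Y) A c.
Proof.
case=> AY A0 YA0 Ac xA; split => //.
- exact: subset_trans AY (subsetUr _ _).
- case/set0Pn: YA0 => b; rewrite !inE => /andP[bA bY].
  by apply/set0Pn; exists b; rewrite !inE bA bY orbT.
- move=> a b aA; rewrite !inE => /andP[bA /orP[/eqP-> | bY]].
    by rewrite d_sym xA.
  by apply: Ac; rewrite // inE bA.
Qed.

Lemma uniform_cut_outer_colours Y A c x a0 b0 :
    uniform_cut Y A c -> a0 \in A -> b0 \in Y :\: A ->
    d x a0 != c -> d x b0 != c ->
  {in Y, forall y, d x y != c -> d x y = d x a0}.
Proof.
case=> _ _ _ Ac a0A b0B xa0 xb0.
have xa0_xb0 : d x a0 = d x b0 by apply: ultra_isosceles; rewrite (Ac a0 b0).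
move=> y yY xy; case: (boolP (y \in A)) => yA.
  by rewrite xa0_xb0; apply: ultra_isosceles; rewrite (Ac y b0).
have yB : y \in Y :\: A by rewrite inE yA.
by apply: ultra_isosceles; rewrite (d_sym y a0) (Ac a0 y).
Qed.

Lemma uniform_cut_inner_colour (Y A : {set X}) c x a0 b0 a z :
    x \notin Y -> uniform_cut Y A c -> a0 \in A -> b0 \in Y :\: A ->
    d x a0 != c -> d x b0 != c ->
  a \in Y -> z \in Y -> d x a = c -> d x z != c -> d a z = c.
Proof.
move=> xY cut; wlog aA : A a0 b0 cut / a \in A.
  move=> wlog a0A b0B xa0 xb0 aY zY xa xz.
  case: (boolP (a \in A)) => aA; first exact: (wlog A a0 b0).
  have [AY _ _ _] := cut.
  apply: (wlog (Y :\: A) b0 a0) => //; first exact: uniform_cutC.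
    by rewrite inE aA.
  by rewrite !inE a0A (subsetP AY).
move=> a0A b0B xa0 xb0 aY zY xa xz; have [_ _ _ Ac] := cut.
case: (boolP (z \in A)) => zA; last by apply: Ac; rewrite // inE zA.
have colour := uniform_cut_outer_colours cut a0A b0B xa0 xb0.
have /andP[b0A b0Y] : (b0 \notin A) && (b0 \in Y) by rewrite -in_setD.
have xz_xb0 : d x z = d x b0 by rewrite (colour z) // (colour b0).
have neq_x y : y \in Y -> x != y by move=> yY; apply: contraNneq xY => ->.
apply: (@ultra_path_colour x a b0 z c (d x b0)) => //.
- have ab0 : a != b0 by apply: contraNneq b0A => <-.
  have az : a != z by apply: contraNneq xz => <-; rewrite xa.
  have b0z : b0 != z by apply: contraNneq b0A => ->.
  by rewrite /= !inE !negb_or !neq_x // ab0 az b0z.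
- by rewrite eq_sym.
- exact: Ac.
- by rewrite d_sym; apply: Ac.
Qed.

Lemma uniform_cut_add_mixed (Y A : {set X}) c x a0 b0 :
    x \notin Y -> uniform_cut Y A c -> a0 \in A -> b0 \in Y :\: A ->
    d x a0 != c -> d x b0 != c ->
  exists A' c', uniform_cut (x |: Y) A' c'.
Proof.
move=> xY cut a0A b0B xa0 xb0; have [AY _ _ _] := cut.
have a0Y : a0 \in Y := subsetP AY _ a0A.
have colour := uniform_cut_outer_colours cut a0A b0B xa0 xb0.
pose A' := [set y in Y | d x y == c].
have [A'0 | [a aA']] := set_0Vmem A'.
  exists [set x], (d x a0); split.
  - by rewrite sub1set setU11.
  - by apply/set0Pn; exists x; rewrite set11.
  - apply/set0Pn; exists a0; rewrite !inE a0Y orbT andbT.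
    by apply: contraNneq xY => <-.
  - move=> _ y /set1P->; rewrite !inE => /andP[yx /orP[/eqP yx' | yY]].
      by rewrite yx' eqxx in yx.
    apply: colour => //; apply: contraT => /negbNE xy.
    have : y \in A' by rewrite inE yY xy.
    by rewrite A'0 inE.
exists A', c; split.
- by apply/subsetP => y; rewrite inE => /andP[yY _]; rewrite setU1r.
- by apply/set0Pn; exists a.
- by apply/set0Pn; exists x; rewrite !inE eqxx (negbTE xY).
- move=> a' z; rewrite !inE => /andP[a'Y /eqP xa'] /andP[zA' /orP[/eqP-> | zY]].
    by rewrite d_sym.
  rewrite zY /= in zA'.
  exact: (uniform_cut_inner_colour xY cut a0A b0B).
Qed.

Lemma uniform_cut_add (Y A : {set X}) c x :
  x \notin Y -> uniform_cut Y A c -> exists A' c', uniform_cut (x |: Y) A' c'.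
Proof.
move=> xY cut.
have [/forall_inP xA | /forall_inPn[a0 a0A xa0]] := boolP [forall a in A, d x a == c].
  by exists A, c; apply: uniform_cut_add_uniform => // a /xA/eqP.
have [/forall_inP xB | /forall_inPn[b0 b0B xb0]] :=
  boolP [forall b in Y :\: A, d x b == c].
  exists (Y :\: A), c.
  by apply: uniform_cut_add_uniform (uniform_cutC cut) _ => b /xB/eqP.
exact: uniform_cut_add_mixed xY cut a0A b0B xa0 xb0.
Qed.

Lemma exists_uniform_cut (S : {set X}) : 1 < #|S| -> exists A c, uniform_cut S A c.
Proof.
have [n] := ubnP #|S|; elim: n S => // n IH S ltSn gtS1.
have [x xS] : exists x, x \in S by apply/set0Pn; rewrite -card_gt0 ltnW.
have cardS : #|S| = #|S :\ x|.+1 by rewrite (cardsD1 x S) xS.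
have xY : x \notin S :\ x by rewrite setD11.
rewrite -(setD1K xS); case: (ltnP 1 #|S :\ x|) => [gtY1 | leY1].
  have [A [c cut]] := IH (S :\ x) ltac:(lia) gtY1.
  exact: uniform_cut_add xY cut.
have /cards1P[y defY] : #|S :\ x| == 1 by apply/eqP; lia.
rewrite defY in xY *; exists [set x], (d x y); apply: uniform_cut_pair.
by apply: contraNneq xY => ->; rewrite set11.
Qed.

Definition compatible_order (s : seq X) :=
  {in s & &, forall x y z, index x s < index y s -> index y s < index z s ->
     d x y = d y z -> d x z = d x y}.

Lemma compatible_order_small s : size s <= 1 -> compatible_order s.
Proof.
move=> s1 x y z _ ys _; rewrite -index_mem in ys.
by have /eqP-> : index y s == 0 by rewrite -leqn0 -ltnS (leq_trans ys s1).
Qed.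

Lemma compatible_order_cat s1 s2 c :
    compatible_order s1 -> compatible_order s2 ->
    {in s1 & s2, forall a b, d a b = c} ->
  compatible_order (s1 ++ s2).
Proof.
move=> comp1 comp2 cross x y z; rewrite !mem_cat !index_cat.
move: (index_mem x s1) (index_mem y s1) (index_mem z s1).
case: (boolP (x \in s1)) => x1; case: (boolP (y \in s1)) => y1;
  case: (boolP (z \in s1)) => z1 /= ? ? ? xs ys zs lt_xy lt_yz; try lia.
- exact: comp1.
- by move=> ->; rewrite (cross x z) ?(cross y z).
- by rewrite (cross x y) ?(cross x z).
- by apply: comp2 => //; lia.
Qed.

Lemma exists_compatible_enum (S : {set X}) :
  exists s, [/\ uniq s, s =i S & compatible_order s].
Proof.
have [n] := ubnP #|S|; elim: n S => // n IH S ltSn.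
have [leS1 | /exists_uniform_cut[A [c [AS A0 SA0 Ac]]]] := leqP #|S| 1.
  exists (enum S); split; [exact: enum_uniq | exact: mem_enum |].
  by apply: compatible_order_small; rewrite -cardE.
have defS : A :|: S :\: A = S by rewrite -{2}(setID S A) (setIidPr AS).
have := cardsID A S; rewrite (setIidPr AS) => cardS.
have A_gt0 : 0 < #|A| by rewrite card_gt0.
have B_gt0 : 0 < #|S :\: A| by rewrite card_gt0.
have [s1 [uniq1 mem1 comp1]] := IH A ltac:(lia).
have [s2 [uniq2 mem2 comp2]] := IH (S :\: A) ltac:(lia).
exists (s1 ++ s2); split.
- rewrite cat_uniq uniq1 uniq2 andbT /=; apply/hasPn => y.
  by rewrite mem2 mem1 inE => /andP[].
- by move=> y; rewrite mem_cat mem1 mem2 -in_setU defS.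
- by apply: compatible_order_cat comp1 comp2 _ => a b; rewrite mem1 mem2; apply: Ac.
Qed.

Lemma compatible_flip_order_trans s i :
    (forall x, x \in s) -> compatible_order s ->
  transitive (flip_order (index^~ s) (fun u v => d u v == i)).
Proof.
move=> s_all comp; apply: flip_order_trans.
- exact: index_full_inj.
- by move=> u v; rewrite d_sym.
- move=> x y z lt_xy lt_yz /eqP xy /eqP yz.
  by rewrite (comp x y z) ?s_all // ?xy ?yz.
move=> x y z lt_xy lt_yz /eqP xz; apply: contraT; rewrite negb_or => /andP[xy yz].
have [eq_xy | ne_xy] := eqVneq (d x y) (d y z).
  by move: xy; rewrite -xz (comp x y z) ?s_all ?eqxx.
have xz_yz : d x z != d y z by rewrite xz eq_sym.
by move: xy; rewrite (ultra_isosceles ne_xy xz_yz) xz eqxx.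
Qed.

End SymbolicUltrametric.

Theorem corollary6p4 (X : finType) (k : nat) (d : X -> X -> nat) :
  0 < #|X| -> symbolic_ultrametric k d ->
  complete_edge_colored_perm_graph k (graph_rep_class d).
Proof.
move=> _ [_ _ d_sym d_U2 d_U3].
have [s [s_uniq s_X s_comp]] := exists_compatible_enum d_sym d_U2 d_U3 [set: X].
have s_all x : x \in s by rewrite s_X inE.
have index_lt x : index x s < #|X|.
  by rewrite -cardsT -(eq_card s_X) (card_uniqP s_uniq) index_mem.
pose l x := Ordinal (index_lt x).
have r_inj := index_full_inj s_all.
have l_inj : injective l by move=> x y /(congr1 val)/r_inj.
have [h lK hK] : bijective l by apply: inj_card_bij l_inj _; rewrite card_ord.
have f_sym i : symmetric (fun u v => d u v == i) by move=> u v; rewrite d_sym.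
pose colour_perm i := perm_of_strict_total_order (flip_order_irr _ _)
  (compatible_flip_order_trans d_sym d_U2 (i := i) s_all s_comp)
  (flip_order_total r_inj (f_sym i)) lK hK.
exists l; split; first exact: (Bijective lK hK).
exists (fun i => sval (colour_perm i)) => i _ u v lt_vu.
by rewrite -(svalP (colour_perm i)) /flip_order (ltnNge (index u s)) (ltnW lt_vu).
Qed.
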